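(* For any positive integer $m$, any two words of length $m$ that are permutations of $\{1,2,\dots,m\}$ (i.e. each of $1,\dots,m$ occurs exactly once) are cyclic Knuth equivalent.
   Context: A word is a finite sequence of letters from a totally ordered alphabet (here the integers). A transformation of type $K'$ replaces three consecutive letters $yzx$ of a word with $x<y\le z$ by $yxz$. A transformation of type $K''$ replaces three consecutive letters $xzy$ with $x\le y<z$ by $zxy$. An elementary Knuth transformation is a transformation of type $K'$ or $K''$ or the inverse of one of these. The rotation $R$ moves the last letter of a word to the front (e.g. $3346354\mapsto4334635$). An elementary cyclic Knuth transformation is an elementary Knuth transformation or $R$; two words are cyclic Knuth equivalent if one can be obtained from the other by a finite sequence of elementary cyclic Knuth transformations. *)

From mathcomp Require Import all_boot.
From Stdlib Require Import Relations.
Set Implicit Arguments. Unset Strict Implicit. Unset Printing Implicit Defensive.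

Definition word := seq nat.

Definition K1 (w w' : word) : Prop :=
  exists (u v : word) (x y z : nat),
    x < y <= z /\ w = u ++ [:: y; z; x] ++ v /\ w' = u ++ [:: y; x; z] ++ v.

Definition K2 (w w' : word) : Prop :=
  exists (u v : word) (x y z : nat),
    x <= y < z /\ w = u ++ [:: x; z; y] ++ v /\ w' = u ++ [:: z; x; y] ++ v.

Definition knuth_step (w w' : word) : Prop :=
  K1 w w' \/ K2 w w' \/ K1 w' w \/ K2 w' w.

Definition rotR (w : word) : word :=
  match w with [::] => [::] | a :: s => last a s :: belast a s end.

Definition cyc_knuth_step (w w' : word) : Prop :=
  knuth_step w w' \/ w' = rotR w.

Definition cyc_knuth_equiv (w w' : word) : Prop :=
  clos_refl_trans word cyc_knuth_step w w'.

From mathcomp Require Import all_boot zify.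
From Stdlib Require Import Relations Lia.
Set Implicit Arguments. Unset Strict Implicit. Unset Printing Implicit Defensive.

(* Every permutation can be sorted using only inverse K' moves, inverse K''
   moves and the inverse rotation.  Induct on the length: delete the smallest
   letter a and sort the remaining letters.  Each move on letters larger than
   a can be replayed with a inserted somewhere, because a small letter slips
   through the middle of a Knuth triple.  At the end a sits just after some
   letter of the sorted word; inverse K' moves push it to the end, and a
   rotation brings it to the front.  Cyclic Knuth equivalence is symmetric,
   so any two permutations are equivalent through the sorted word. *)

Lemma rotR_rcons (s : word) e : rotR (rcons s e) = e :: s.
Proof. by case: s => [|b s] //=; rewrite last_rcons belast_rcons. Qed.

Lemma cyc_knuth_equiv_rot (p q : word) : cyc_knuth_equiv (p ++ q) (q ++ p).
Proof.
elim/last_ind: q p => [|q e IHq] p; first by rewrite cats0; apply: rt_refl.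
apply: rt_trans (_ : cyc_knuth_equiv (e :: p ++ q) _).
  by apply: rt_step; right; rewrite -rcons_cat rotR_rcons.
by rewrite cat_rcons; apply: (IHq (e :: p)).
Qed.

Lemma cyc_knuth_equiv_sym w w' : cyc_knuth_equiv w w' -> cyc_knuth_equiv w' w.
Proof.
elim=> {w w'} [w w' [Hk | ->] | w | w1 w2 w3 _ IH12 _ IH23].
- by apply: rt_step; left; case: Hk => [|[|[|]]] H; rewrite /knuth_step; tauto.
- case/lastP: w => [|s e]; first exact: rt_refl.
  by rewrite rotR_rcons -cats1; apply: (cyc_knuth_equiv_rot [:: e] s).
- exact: rt_refl.
- exact: rt_trans IH23 IH12.
Qed.

Inductive ck_step : word -> word -> Prop :=
  | CkK1 u v x y z : x < y <= z ->
      ck_step (u ++ [:: y; x; z] ++ v) (u ++ [:: y; z; x] ++ v)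
  | CkK2 u v x y z : x <= y < z ->
      ck_step (u ++ [:: z; x; y] ++ v) (u ++ [:: x; z; y] ++ v)
  | CkRot e s : ck_step (e :: s) (rcons s e).

Definition ck_red : relation word := clos_refl_trans word ck_step.

Lemma ck_step_equiv w w' : ck_step w w' -> cyc_knuth_equiv w w'.
Proof.
case=> [u v x y z H | u v x y z H | e s].
- by apply: rt_step; left; right; right; left; exists u, v, x, y, z.
- by apply: rt_step; left; right; right; right; exists u, v, x, y, z.
- by rewrite -cats1; apply: (cyc_knuth_equiv_rot [:: e] s).
Qed.

Lemma ck_red_equiv w w' : ck_red w w' -> cyc_knuth_equiv w w'.
Proof.
elim=> [w1 w2 /ck_step_equiv // | w1 | w1 w2 w3 _ IH12 _ IH23].
  exact: rt_refl.
exact: rt_trans IH12 IH23.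
Qed.

Lemma ck_step_perm w w' : ck_step w w' -> perm_eq w w'.
Proof.
case=> [u v x y z _ | u v x y z _ | e s]; last by rewrite perm_sym perm_rcons.
- by rewrite perm_cat2l perm_cat2r perm_cons (perm_catC [:: x] [:: z]).
- by rewrite perm_cat2l perm_cat2r (perm_catCA [:: z] [:: x] [:: y]).
Qed.

Lemma ck_red_rot (p q : word) : ck_red (p ++ q) (q ++ p).
Proof.
elim: p q => [|e p IHp] q /=; first by rewrite cats0; apply: rt_refl.
apply: rt_trans (_ : ck_red (p ++ rcons q e) _).
  by apply: rt_step; rewrite -rcons_cat; apply: CkRot.
by rewrite -cat_rcons; apply: IHp.
Qed.

Lemma ck_red_slot_end (a p : nat) (x y : word) : a < p -> path leq p y ->
  ck_red (x ++ p :: a :: y) (x ++ p :: y ++ [:: a]).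
Proof.
elim: y x p => [|c y IHy] x p ap /=; first by move=> _; apply: rt_refl.
case/andP=> pc cy.
apply: rt_trans (_ : ck_red (x ++ [:: p; c; a] ++ y) _).
  by apply: rt_step; apply: CkK1; lia.
have := IHy (rcons x p) c ltac:(lia) cy.
by rewrite !cat_rcons.
Qed.

Lemma cat_split3 (z1 z2 u v : word) x1 x2 x3 :
  u ++ [:: x1; x2; x3] ++ v = z1 ++ z2 ->
  [\/ exists2 u2, u = z1 ++ u2 & z2 = u2 ++ [:: x1; x2; x3] ++ v,
      z1 = rcons u x1 /\ z2 = x2 :: x3 :: v,
      z1 = u ++ [:: x1; x2] /\ z2 = x3 :: v
    | exists2 v1, z1 = u ++ [:: x1; x2; x3] ++ v1 & v = v1 ++ z2].
Proof.
elim: u z1 => [|b u IHu] [|c z1] /=.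
- by move=> <-; apply: Or41; exists [::].
- case=> <- {c}; case: z1 => [|c z1] /=; first by move=> <-; apply: Or42.
  case=> <- {c}; case: z1 => [|c z1] /=; first by move=> <-; apply: Or43.
  by case=> <- {c} ->; apply: Or44; exists z1.
- by move=> <-; apply: Or41; exists (b :: u).
- case=> <- {c} /IHu [[u2 -> ->] | [-> ->] | [-> ->] | [v1 -> ->]].
  + by apply: Or41; exists u2.
  + exact: Or42.
  + exact: Or43.
  + by apply: Or44; exists v1.
Qed.

Section Insertion.

Variable a : nat.

Definition insertion_red (z z' : word) : Prop :=
  forall z1 z2, z = z1 ++ z2 ->
  exists z1' z2', z' = z1' ++ z2' /\ ck_red (z1 ++ a :: z2) (z1' ++ a :: z2').

Lemma insertion_red_refl z : insertion_red z z.
Proof. by move=> z1 z2 ->; exists z1, z2; split; last exact: rt_refl. Qed.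

Lemma insertion_red_trans z z' z'' :
  insertion_red z z' -> insertion_red z' z'' -> insertion_red z z''.
Proof.
move=> R1 R2 z1 z2 /R1 [z1' [z2' [/R2 [z1'' [z2'' [-> D2]]] D1]]].
by exists z1'', z2''; split; last exact: rt_trans D1 D2.
Qed.

(* Inside a triple x1 x2 x3 whose middle letter exceeds a, the letter a can be
   moved out to the left (an inverse K'' move with x1) or to the right (an
   inverse K' move with x3) before the triple itself is rewritten. *)
Lemma insertion_red_triple x1 x2 x3 (t : word) :
  a < x2 < x1 -> x2 <= x3 ->
  (forall u v, ck_red (u ++ [:: x1; x2; x3] ++ v) (u ++ t ++ v)) ->
  forall u v, insertion_red (u ++ [:: x1; x2; x3] ++ v) (u ++ t ++ v).
Proof.
move=> lt_a_x2_x1 le_x2_x3 Ht u v z1 z2 /cat_split3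
  [[u2 -> ->] | [-> ->] | [-> ->] | [v1 -> ->]].
- exists z1, (u2 ++ t ++ v); split; first by rewrite -catA.
  by have := Ht (z1 ++ a :: u2) v; rewrite -!catA.
- exists u, (t ++ v); split=> //.
  apply: rt_trans (_ : ck_red (u ++ [:: a; x1; x2] ++ x3 :: v) _).
    have := rt_step _ _ _ _ (@CkK2 u (x3 :: v) a x2 x1 ltac:(lia)).
    by rewrite cat_rcons.
  by have := Ht (rcons u a) v; rewrite !cat_rcons.
- exists (u ++ t), v; split; first by rewrite catA.
  apply: rt_trans (_ : ck_red (rcons u x1 ++ [:: x2; x3; a] ++ v) _).
    have := rt_step _ _ _ _ (@CkK1 (rcons u x1) v a x2 x3 ltac:(lia)).
    by rewrite cat_rcons -catA.
  by have := Ht u (a :: v); rewrite cat_rcons -!catA.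
- exists (u ++ t ++ v1), z2; split; first by rewrite !catA.
  by have := Ht u (v1 ++ a :: z2); rewrite -!catA.
Qed.

Lemma insertion_red_rot e s : insertion_red (e :: s) (rcons s e).
Proof.
case=> [|c z1] z2 /=.
- move=> <-; exists s, [:: e]; split; first by rewrite cats1.
  exact: (ck_red_rot [:: a; e] s).
- case=> <- ->; exists z1, (rcons z2 e); split; first by rewrite rcons_cat.
  by apply: rt_step; have := CkRot e (z1 ++ a :: z2); rewrite rcons_cat.
Qed.

Lemma insertion_red_step z z' : ck_step z z' -> all (fun c => a < c) z ->
  insertion_red z z'.
Proof.
case=> [u v x y zz H | u v x y zz H | e s] gt_a; last exact: insertion_red_rot.
- have ax : a < x by move/allP: gt_a; apply; rewrite !mem_cat !inE eqxx !orbT.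
  by apply: insertion_red_triple; [lia | lia | move=> u' v'; apply: rt_step; apply: CkK1].
- have ax : a < x by move/allP: gt_a; apply; rewrite !mem_cat !inE eqxx !orbT.
  by apply: insertion_red_triple; [lia | lia | move=> u' v'; apply: rt_step; apply: CkK2].
Qed.

Lemma insertion_red_ck_red z z' : ck_red z z' -> all (fun c => a < c) z ->
  insertion_red z z'.
Proof.
move/clos_rt_rt1n_iff; elim=> {z z'} [z _ | z z' z'' Hs _ IH] gt_a.
  exact: insertion_red_refl.
apply: insertion_red_trans (insertion_red_step Hs gt_a) (IH _).
by rewrite -(perm_all _ (ck_step_perm Hs)).
Qed.

End Insertion.

Lemma ck_red_iota n k w : perm_eq w (iota k n) -> ck_red w (iota k n).
Proof.
elim: n k w => [|n IHn] k w perm_w.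
  by move: (perm_size perm_w); rewrite size_iota => /size0nil ->; apply: rt_refl.
have k_in_w : k \in w by rewrite (perm_mem perm_w) inE eqxx.
move: perm_w; case/splitPr: k_in_w => z1 z2 perm_w.
have perm_z : perm_eq (z1 ++ z2) (iota k.+1 n).
  by move: perm_w; rewrite (perm_catCA z1 [:: k] z2) perm_cons.
have gt_k : all (fun c => k < c) (z1 ++ z2).
  by apply/allP => c; rewrite (perm_mem perm_z) mem_iota; lia.
have [z1' [z2' [iota_eq red_k]]] :=
  insertion_red_ck_red (IHn _ _ perm_z) gt_k (erefl _).
apply: rt_trans red_k _.
case/lastP: z1' iota_eq => [|x p] iota_eq; first by rewrite /= iota_eq; apply: rt_refl.
have gt_iota c : c \in iota k.+1 n -> k < c by rewrite mem_iota; lia.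
have kp : k < p by apply: gt_iota; rewrite iota_eq mem_cat mem_rcons inE eqxx.
have p_z2' : path leq p z2'.
  by have := iota_sorted k.+1 n; rewrite iota_eq cat_rcons sorted_cat_cons => /andP[].
rewrite cat_rcons; apply: rt_trans (ck_red_slot_end x kp p_z2') _.
rewrite /= iota_eq cat_rcons.
by have := ck_red_rot (x ++ p :: z2') [:: k]; rewrite -catA.
Qed.

Theorem mainTheorem10 (m : nat) (w w' : word) :
  0 < m ->
  perm_eq w (iota 1 m) -> perm_eq w' (iota 1 m) ->
  cyc_knuth_equiv w w'.
Proof.
move=> _ perm_w perm_w'.
apply: rt_trans (ck_red_equiv (ck_red_iota perm_w)) _.
exact/cyc_knuth_equiv_sym/ck_red_equiv/ck_red_iota.
Qed.
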